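(* Let $f:\mathbb{R}^n\to\mathbb{R}^m$, $F:\mathbb{R}^n\rightrightarrows\mathbb{R}^m$, $\bar x\in\mathbb{R}^n$ and $\bar v\in(f+F)(\bar x)$. Assume $f$ is calm at $\bar x$: there exist $\ell>0$ and a neighborhood $U$ of $\bar x$ with $\|f(x)-f(\bar x)\|\le\ell\|x-\bar x\|$ for all $x\in U$. Then $$\widehat D^*f(\bar x)(w)+\widehat D^*F\big(\bar x,\bar v-f(\bar x)\big)(w)\subset\widehat D^*(f+F)(\bar x,\bar v)(w)\quad\text{for all }w\in\mathbb{R}^m.$$ If in addition $f$ is Fréchet differentiable at $\bar x$, this inclusion holds as an equality.
   Context: Regular normal cone: $\widehat N_\Omega(\bar z):=\{v:\limsup_{z\to\bar z,\,z\in\Omega}\frac{\langle v,z-\bar z\rangle}{\|z-\bar z\|}\le0\}$. Regular coderivative of $F:\mathbb{R}^n\rightrightarrows\mathbb{R}^m$ at $(\bar x,\bar y)\in\operatorname{gph}F$: $\widehat D^*F(\bar x,\bar y)(w):=\{v:(v,-w)\in\widehat N_{\operatorname{gph}F}(\bar x,\bar y)\}$; for single-valued $f$, $\widehat D^*f(\bar x):=\widehat D^*f(\bar x,f(\bar x))$. $(f+F)(x):=f(x)+F(x)$. *)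

From HB Require Import structures.
From mathcomp Require Import all_boot all_order all_algebra.
From mathcomp Require Import all_classical all_reals all_analysis.
Set Implicit Arguments. Unset Strict Implicit. Unset Printing Implicit Defensive.
Import Order.TTheory GRing.Theory Num.Theory.
Import numFieldNormedType.Exports.
Local Open Scope classical_set_scope.
Local Open Scope ring_scope.

Definition dotv (R : realType) (k : nat) (v z : 'rV[R]_k) : R :=
  \sum_(i < k) v 0 i * z 0 i.
Definition enorm (R : realType) (k : nat) (z : 'rV[R]_k) : R :=
  Num.sqrt (\sum_(i < k) z 0 i ^+ 2).

(* Regular (Fréchet) normal cone: v such that
   limsup_{z -> zb, z in Om} <v, z - zb> / ||z - zb|| <= 0,
   written out in epsilon-delta form (z ranges over Om \ {zb}). *)
Definition rnormal (R : realType) (k : nat) (Om : set 'rV[R]_k) (zb : 'rV[R]_k)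
  : set 'rV[R]_k :=
  [set v | forall eps : R, 0 < eps -> exists2 del : R, 0 < del &
     forall z, Om z -> 0 < enorm (z - zb) < del ->
       dotv v (z - zb) <= eps * enorm (z - zb)].

Definition gph (R : realType) (n m : nat) (F : 'rV[R]_n -> set 'rV[R]_m)
  : set 'rV[R]_(n + m) :=
  [set z | exists x y, F x y /\ z = row_mx x y].

Definition rcoder (R : realType) (n m : nat) (F : 'rV[R]_n -> set 'rV[R]_m)
  (xb : 'rV[R]_n) (yb : 'rV[R]_m) (w : 'rV[R]_m) : set 'rV[R]_n :=
  [set v | rnormal (gph F) (row_mx xb yb) (row_mx v (- w))].

Definition sv (R : realType) (n m : nat) (f : 'rV[R]_n -> 'rV[R]_m)
  : 'rV[R]_n -> set 'rV[R]_m := fun x => [set f x].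

Definition rcoder_fun (R : realType) (n m : nat) (f : 'rV[R]_n -> 'rV[R]_m)
  (xb : 'rV[R]_n) (w : 'rV[R]_m) : set 'rV[R]_n :=
  rcoder (sv f) xb (f xb) w.

Definition fplusF (R : realType) (n m : nat) (f : 'rV[R]_n -> 'rV[R]_m)
  (F : 'rV[R]_n -> set 'rV[R]_m) : 'rV[R]_n -> set 'rV[R]_m :=
  fun x => [set f x + y | y in F x].

Definition setsumv (R : realType) (k : nat) (A B : set 'rV[R]_k) : set 'rV[R]_k :=
  [set a + b | a in A & b in B].

From HB Require Import structures.
From mathcomp Require Import all_boot all_order all_algebra.
From mathcomp Require Import all_classical all_reals all_analysis.
From mathcomp Require Import ring lra.
Import Order.TTheory GRing.Theory Num.Theory.
Import numFieldNormedType.Exports.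
Local Open Scope classical_set_scope.
Local Open Scope ring_scope.

(* The shear (x, v) |-> (x, v - f x) maps gph (f + F) onto gph F, and by calmness of f
   it moves points near (xb, vb) at most a constant times farther from the base point;
   likewise (x, v) |-> (x, f x) maps gph (f + F) into gph f.  The pairing of
   (u1 + u2, -w) with an increment of gph (f + F) splits into the pairing of (u1, -w)
   with the corresponding increment of gph f plus that of (u2, -w) with the increment
   of gph F, so the two regular-normal estimates add up.  When f is differentiable,
   u1 := (f'(xb))^T w pairs with graph increments of f to -<w, o(|x - xb|)>, and the
   inverse shear transfers the estimate for (u, -w) to (u - u1, -w) up to the same
   o-term: this gives the reverse inclusion. *)

Set Implicit Arguments. Unset Strict Implicit.

Section Euclid.
Variable R : realType.
Implicit Types (k l : nat).

Lemma enorm_ge0 k (z : 'rV[R]_k) : 0 <= enorm z.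
Proof. exact: sqrtr_ge0. Qed.

Lemma sqr_enorm k (z : 'rV[R]_k) : enorm z ^+ 2 = \sum_(i < k) z 0 i ^+ 2.
Proof. by rewrite sqr_sqrtr //; apply: sumr_ge0 => i _; exact: sqr_ge0. Qed.

Lemma ler_enorm k l (a : 'rV[R]_k) (b : 'rV[R]_l) :
  (enorm a <= enorm b) = (enorm a ^+ 2 <= enorm b ^+ 2).
Proof. by rewrite ler_pXn2r ?nnegrE ?enorm_ge0. Qed.

Lemma enormN k (z : 'rV[R]_k) : enorm (- z) = enorm z.
Proof. by rewrite /enorm; congr Num.sqrt; apply: eq_bigr => i _; rewrite mxE sqrrN. Qed.

Lemma coord_le_enorm k (z : 'rV[R]_k) i : `|z 0 i| <= enorm z.
Proof.
rewrite -sqrtr_sqr ler_sqrt; last by apply: sumr_ge0 => j _; exact: sqr_ge0.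
by rewrite (bigD1 i) //= lerDl; apply: sumr_ge0 => j _; exact: sqr_ge0.
Qed.

Lemma enorm_eq0 k (z : 'rV[R]_k) : enorm z = 0 -> z = 0.
Proof.
move=> z0; apply/rowP => i; rewrite mxE; apply/normr0_eq0/eqP.
by rewrite eq_le normr_ge0 andbT -z0 coord_le_enorm.
Qed.

Lemma enorm_row_mx k l (a : 'rV[R]_k) (b : 'rV[R]_l) :
  enorm (row_mx a b) ^+ 2 = enorm a ^+ 2 + enorm b ^+ 2.
Proof.
rewrite !sqr_enorm big_split_ord /=.
by congr (_ + _); apply: eq_bigr => i _; rewrite ?row_mxEl ?row_mxEr.
Qed.

Lemma enorm_le_row_mxl k l (a : 'rV[R]_k) (b : 'rV[R]_l) :
  enorm a <= enorm (row_mx a b).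
Proof. by rewrite ler_enorm enorm_row_mx lerDl sqr_ge0. Qed.

Lemma enorm_le_row_mxr k l (a : 'rV[R]_k) (b : 'rV[R]_l) :
  enorm b <= enorm (row_mx a b).
Proof. by rewrite ler_enorm enorm_row_mx lerDr sqr_ge0. Qed.

Lemma enorm_row_mx_le k l (a : 'rV[R]_k) (b : 'rV[R]_l) :
  enorm (row_mx a b) <= enorm a + enorm b.
Proof.
rewrite -[leRHS]ger0_norm ?addr_ge0 ?enorm_ge0 // -sqrtr_sqr.
rewrite -[leLHS]ger0_norm ?enorm_ge0 // -sqrtr_sqr ler_sqrt ?sqr_ge0 //.
rewrite enorm_row_mx sqrrD lerD2r lerDl.
by rewrite mulrn_wge0 // mulr_ge0 ?enorm_ge0.
Qed.

(* A crude constant suffices here and needs only (a + b)^2 <= 2 (a^2 + b^2). *)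
Lemma enormD_le k (a b : 'rV[R]_k) : enorm (a + b) <= 2 * (enorm a + enorm b).
Proof.
have ha := enorm_ge0 a; have hb := enorm_ge0 b.
rewrite -[leRHS]ger0_norm ?mulr_ge0 ?addr_ge0 // -sqrtr_sqr.
rewrite -[leLHS]ger0_norm ?enorm_ge0 // -sqrtr_sqr ler_sqrt ?sqr_ge0 //.
apply: (@le_trans _ _ (2 * (enorm a ^+ 2 + enorm b ^+ 2))); last by nra.
rewrite !sqr_enorm -big_split mulr_sumr /=.
apply: ler_sum => i _; rewrite mxE; have := sqr_ge0 (a 0 i - b 0 i); nra.
Qed.

Lemma mxnorm_le_enorm k (z : 'rV[R]_k) : `|z| <= enorm z.
Proof.
rewrite [leLHS]/Num.Def.normr /= mx_normrE (bigmax_le _ (enorm_ge0 _)) //= => -[i j] _.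
by rewrite [i]ord1; exact: coord_le_enorm.
Qed.

Lemma enorm_le_mxnorm k (z : 'rV[R]_k) : enorm z <= Num.sqrt k%:R * `|z|.
Proof.
rewrite -[`|z|]ger0_norm // -sqrtr_sqr -sqrtrM // ler_sqrt ?mulr_ge0 ?sqr_ge0 //.
rewrite mulr_natl -[k in _ *+ k]card_ord -sumr_const.
apply: ler_sum => i _; rewrite -real_normK ?num_real // lerXn2r ?nnegrE //.
rewrite [leRHS]/Num.Def.normr /= mx_normrE.
by apply/bigmax_geP; right; exists (0, i).
Qed.

End Euclid.

Section DotProduct.
Variable R : realType.
Implicit Types (k l : nat).

Lemma dotv0r k (v : 'rV[R]_k) : dotv v 0 = 0.
Proof. by rewrite /dotv big1 // => i _; rewrite mxE mulr0. Qed.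

Lemma dotvDl k (a b z : 'rV[R]_k) : dotv (a + b) z = dotv a z + dotv b z.
Proof. by rewrite /dotv -big_split; apply: eq_bigr => i _; rewrite mxE mulrDl. Qed.

Lemma dotvDr k (z a b : 'rV[R]_k) : dotv z (a + b) = dotv z a + dotv z b.
Proof. by rewrite /dotv -big_split; apply: eq_bigr => i _; rewrite mxE mulrDr. Qed.

Lemma dotvNl k (a z : 'rV[R]_k) : dotv (- a) z = - dotv a z.
Proof. by rewrite /dotv -sumrN; apply: eq_bigr => i _; rewrite mxE mulNr. Qed.

Lemma dotvNr k (z a : 'rV[R]_k) : dotv z (- a) = - dotv z a.
Proof. by rewrite /dotv -sumrN; apply: eq_bigr => i _; rewrite mxE mulrN. Qed.

Lemma dotv_row_mx k l (a p : 'rV[R]_k) (c q : 'rV[R]_l) :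
  dotv (row_mx a c) (row_mx p q) = dotv a p + dotv c q.
Proof.
rewrite /dotv big_split_ord /=.
by congr (_ + _); apply: eq_bigr => i _; rewrite ?row_mxEl ?row_mxEr.
Qed.

Lemma dotv_row_mx_split k l (a b p : 'rV[R]_k) (c q r : 'rV[R]_l) :
  dotv (row_mx (a + b) c) (row_mx p (q + r)) =
  dotv (row_mx a c) (row_mx p q) + dotv (row_mx b c) (row_mx p r).
Proof. by rewrite !dotv_row_mx dotvDl dotvDr; ring. Qed.

Lemma dotv_le k (v z : 'rV[R]_k) : dotv v z <= (\sum_(i < k) `|v 0 i|) * enorm z.
Proof.
rewrite /dotv mulr_suml; apply: ler_sum => i _.
rewrite (le_trans (ler_norm _)) // normrM ler_wpM2l //; exact: coord_le_enorm.
Qed.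

Definition adjoint k l (A : 'rV[R]_k -> 'rV[R]_l) (w : 'rV[R]_l) : 'rV[R]_k :=
  \row_j dotv w (A (delta_mx 0 j)).

Lemma dotv_adjoint k l (A : {linear 'rV[R]_k -> 'rV[R]_l}) w p :
  dotv (adjoint A w) p = dotv w (A p).
Proof.
rewrite [in RHS](row_sum_delta p) linear_sum /dotv.
under [RHS]eq_bigr => i _ do rewrite summxE mulr_sumr.
rewrite exchange_big /=; apply: eq_bigr => j _.
rewrite mxE mulr_suml; apply: eq_bigr => i _.
by rewrite linearZ /= mxE mulrCA mulrC.
Qed.

Lemma dotv_row_mx_adjoint k l (A : {linear 'rV[R]_k -> 'rV[R]_l}) w p q :
  dotv (row_mx (adjoint A w) (- w)) (row_mx p q) = dotv w (A p - q).
Proof. by rewrite dotv_row_mx dotv_adjoint dotvNl dotvDr dotvNr. Qed.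

End DotProduct.

Section UpperLittleO.
Variable R : realType.
Implicit Types (k l : nat).

Definition upper_o k (Om : set 'rV[R]_k) (zb : 'rV[R]_k) (e : 'rV[R]_k -> R) :=
  forall eps : R, 0 < eps -> exists2 del : R, 0 < del &
    forall z, Om z -> enorm (z - zb) < del -> e z <= eps * enorm (z - zb).

Lemma rnormalE k (Om : set 'rV[R]_k) zb v :
  rnormal Om zb v <-> upper_o Om zb (fun z => dotv v (z - zb)).
Proof.
split=> hv eps /hv[del del0 hdel]; exists del => // z Oz zdel.
- have [Epos|Ele0] := ltP 0 (enorm (z - zb)); first by rewrite hdel ?Epos.
  have E0 : enorm (z - zb) = 0 by apply/eqP; rewrite eq_le Ele0 enorm_ge0.
  by rewrite E0 mulr0 (enorm_eq0 E0) dotv0r.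
- by move: zdel => /andP[_]; exact: hdel.
Qed.

Lemma upper_o_le k (Om : set 'rV[R]_k) zb (e e' : 'rV[R]_k -> R) :
  upper_o Om zb e' -> (forall z, Om z -> e z <= e' z) -> upper_o Om zb e.
Proof.
move=> he' ee' eps /he'[del del0 hdel]; exists del => // z Oz zdel.
by rewrite (le_trans (ee' z Oz)) ?hdel.
Qed.

Lemma upper_oD k (Om : set 'rV[R]_k) zb (e1 e2 : 'rV[R]_k -> R) :
  upper_o Om zb e1 -> upper_o Om zb e2 -> upper_o Om zb (fun z => e1 z + e2 z).
Proof.
move=> he1 he2 eps eps0; have eps20 : 0 < eps / 2 by rewrite divr_gt0.
have [del1 del10 hdel1] := he1 _ eps20; have [del2 del20 hdel2] := he2 _ eps20.
exists (Num.min del1 del2); first by rewrite lt_min del10.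
move=> z Oz; rewrite lt_min => /andP[z1 z2].
have := hdel1 z Oz z1; have := hdel2 z Oz z2; lra.
Qed.

Lemma upper_oZ k (Om : set 'rV[R]_k) zb (e : 'rV[R]_k -> R) c :
  0 <= c -> upper_o Om zb e -> upper_o Om zb (fun z => c * e z).
Proof.
move=> c0 he eps eps0; have epsc0 : 0 < eps / (c + 1) by rewrite divr_gt0 ?ltr_wpDl.
have [del del0 hdel] := he _ epsc0; exists del => // z Oz zdel.
rewrite (le_trans (ler_wpM2l c0 (hdel z Oz zdel))) // mulrA.
apply: ler_wpM2r; first exact: enorm_ge0.
by rewrite mulrCA ger_pMr // ler_pdivrMr ?ltr_wpDl // mul1r lerDl.
Qed.

Lemma upper_o_comp k l (Om : set 'rV[R]_k) (Om' : set 'rV[R]_l) zb zb'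
    (phi : 'rV[R]_l -> 'rV[R]_k) (e : 'rV[R]_k -> R) (C r : R) :
  0 <= C -> 0 < r ->
  (forall z, Om' z -> enorm (z - zb') < r ->
     Om (phi z) /\ enorm (phi z - zb) <= C * enorm (z - zb')) ->
  upper_o Om zb e -> upper_o Om' zb' (e \o phi).
Proof.
move=> C0 r0 hphi he eps eps0; have C10 : 0 < C + 1 by rewrite ltr_wpDl.
have [del del0 hdel] := he _ (divr_gt0 eps0 C10).
exists (Num.min (del / (C + 1)) r); first by rewrite lt_min divr_gt0 ?r0.
move=> z Oz; rewrite lt_min ltr_pdivlMr // => /andP[zdel zr].
have [Ophi phiC] := hphi z Oz zr; have E0 := enorm_ge0 (z - zb').
have phiC1 : enorm (phi z - zb) < del.
  rewrite (le_lt_trans phiC) // (le_lt_trans _ zdel) // mulrC.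
  by apply: ler_wpM2l => //; rewrite lerDl.
have epsC0 : 0 <= eps / (C + 1) by rewrite divr_ge0 ?ltW.
rewrite /= (le_trans (hdel _ Ophi phiC1)) // (le_trans (ler_wpM2l epsC0 phiC)) //.
rewrite mulrA; apply: ler_wpM2r => //.
by rewrite mulrAC ler_pdivrMr // ler_wpM2l ?lerDl // ltW.
Qed.

End UpperLittleO.

Section Remainder.
Variables (R : realType) (n m : nat) (f : 'rV[R]_n -> 'rV[R]_m) (xb : 'rV[R]_n).
Hypothesis df : differentiable f xb.

Lemma upper_o_mxnorm_remainder :
  upper_o setT xb (fun x => `|f x - f xb - 'd f xb (x - xb)|).
Proof.
move=> eps eps0; have /eqaddoP/(_ eps eps0)/nbhs_normP[del del0 hdel] := diff_locally df.
exists del => // x _ xdel.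
have /= := hdel (x - xb); rewrite /ball_ /= sub0r normrN.
move=> /(_ (le_lt_trans (mxnorm_le_enorm _) xdel)) /=.
rewrite !fctE /= subrK opprD addrA => /le_trans; apply.
by rewrite ler_wpM2l ?mxnorm_le_enorm // ltW.
Qed.

Lemma upper_o_remainder (w : 'rV[R]_m) :
  upper_o setT xb (fun x => dotv w (f x - f xb - 'd f xb (x - xb))).
Proof.
set c := (\sum_(i < m) `|w 0 i|) * Num.sqrt m%:R.
have c0 : 0 <= c by rewrite mulr_ge0 ?sqrtr_ge0 ?sumr_ge0.
apply: (upper_o_le (upper_oZ c0 upper_o_mxnorm_remainder)) => x _.
by rewrite (le_trans (dotv_le _ _)) // -mulrA ler_wpM2l ?sumr_ge0 ?enorm_le_mxnorm.
Qed.

End Remainder.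

Lemma near_enorm (R : realType) n (xb : 'rV[R]_n) (P : 'rV[R]_n -> Prop) :
  (\forall x \near xb, P x) ->
  exists2 r : R, 0 < r & forall x, enorm (x - xb) < r -> P x.
Proof.
move=> /nbhs_normP[r r0 hr]; exists r => // x xr; apply: hr.
by rewrite /ball_ /= distrC (le_lt_trans (mxnorm_le_enorm _)).
Qed.

Section GraphMaps.
Variables (R : realType) (n m : nat).
Implicit Types (g : 'rV[R]_n -> 'rV[R]_m) (x : 'rV[R]_n) (y : 'rV[R]_m).

Definition calm g x0 (l r : R) :=
  forall x, enorm (x - x0) < r -> enorm (g x - g x0) <= l * enorm (x - x0).

Lemma calmN g x0 l r : calm g x0 l r -> calm (fun x => - g x) x0 l r.
Proof. by move=> hg x /hg; rewrite -opprD enormN. Qed.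

Definition graph_proj g (z : 'rV[R]_(n + m)) := row_mx (lsubmx z) (g (lsubmx z)).

Definition shear g (z : 'rV[R]_(n + m)) :=
  row_mx (lsubmx z) (rsubmx z + g (lsubmx z)).

Lemma row_mxB x x0 y y0 : row_mx x y - row_mx x0 y0 = row_mx (x - x0) (y - y0).
Proof. by rewrite opp_row_mx add_row_mx. Qed.

Lemma enorm_lsubmxB (z : 'rV[R]_(n + m)) x0 y0 :
  enorm (lsubmx z - x0) <= enorm (z - row_mx x0 y0).
Proof. by rewrite -{2}(hsubmxK z) row_mxB enorm_le_row_mxl. Qed.

Lemma enorm_rsubmxB (z : 'rV[R]_(n + m)) x0 y0 :
  enorm (rsubmx z - y0) <= enorm (z - row_mx x0 y0).
Proof. by rewrite -{2}(hsubmxK z) row_mxB enorm_le_row_mxr. Qed.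

Section Calm.
Variables (g : 'rV[R]_n -> 'rV[R]_m) (x0 : 'rV[R]_n) (y0 : 'rV[R]_m) (l r : R).
Hypotheses (l0 : 0 <= l) (g_calm : calm g x0 l r).

Lemma enorm_graph_projB (z : 'rV[R]_(n + m)) : enorm (z - row_mx x0 y0) < r ->
  enorm (graph_proj g z - row_mx x0 (g x0)) <= (1 + l) * enorm (z - row_mx x0 y0).
Proof.
move=> zr; have hx := enorm_lsubmxB z x0 y0.
have hg := g_calm (le_lt_trans hx zr); have hlx := ler_wpM2l l0 hx.
by rewrite row_mxB (le_trans (enorm_row_mx_le _ _)) //; lra.
Qed.

Lemma enorm_shearB (z : 'rV[R]_(n + m)) : enorm (z - row_mx x0 y0) < r ->
  enorm (shear g z - row_mx x0 (y0 + g x0)) <= (3 + 2 * l) * enorm (z - row_mx x0 y0).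
Proof.
move=> zr; have hx := enorm_lsubmxB z x0 y0; have hy := enorm_rsubmxB z x0 y0.
have hg := g_calm (le_lt_trans hx zr); have hlx := ler_wpM2l l0 hx.
rewrite /shear row_mxB.
have -> : rsubmx z + g (lsubmx z) - (y0 + g x0) = (rsubmx z - y0) + (g (lsubmx z) - g x0).
  by rewrite opprD addrACA.
rewrite (le_trans (enorm_row_mx_le _ _)) //.
have := enormD_le (rsubmx z - y0) (g (lsubmx z) - g x0); lra.
Qed.

End Calm.

Lemma gph_fplusF_shear f F (z : 'rV[R]_(n + m)) :
  gph (fplusF f F) z -> gph F (shear (fun x => - f x) z).
Proof.
move=> [x [_ [[y Fy <-] ->]]]; exists x, y; split => //.
by rewrite /shear row_mxKl row_mxKr addrAC subrr add0r.
Qed.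

Lemma gph_shear_fplusF f F (z : 'rV[R]_(n + m)) :
  gph F z -> gph (fplusF f F) (shear f z).
Proof.
move=> [x [y [Fy ->]]]; exists x, (f x + y); split; last first.
  by rewrite /shear row_mxKl row_mxKr addrC.
by exists y.
Qed.

End GraphMaps.

Section SumRule.
Variables (R : realType) (n m : nat).
Variables (f : 'rV[R]_n -> 'rV[R]_m) (F : 'rV[R]_n -> set 'rV[R]_m).
Variables (xb : 'rV[R]_n) (vb : 'rV[R]_m) (l r : R).
Hypotheses (l0 : 0 <= l) (r0 : 0 < r) (f_calm : calm f xb l r).

Lemma rcoder_sum_sub w :
  setsumv (rcoder_fun f xb w) (rcoder F xb (vb - f xb) w)
    `<=` rcoder (fplusF f F) xb vb w.
Proof.
move=> _ [u1 /rnormalE hu1 [u2 /rnormalE hu2 <-]]; apply/rnormalE.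
have hf : upper_o (gph (fplusF f F)) (row_mx xb vb)
    (fun z => dotv (row_mx u1 (- w)) (graph_proj f z - row_mx xb (f xb))).
  apply: (upper_o_comp (C := 1 + l) _ r0 _ hu1) => [|z _ zr]; first by rewrite addr_ge0.
  split; last exact: (enorm_graph_projB l0 f_calm).
  by exists (lsubmx z), (f (lsubmx z)).
have hF : upper_o (gph (fplusF f F)) (row_mx xb vb)
    (fun z => dotv (row_mx u2 (- w)) (shear (fun x => - f x) z - row_mx xb (vb - f xb))).
  apply: (upper_o_comp (C := 3 + 2 * l) _ r0 _ hu2) => [|z Fz zr].
    by rewrite addr_ge0 ?mulr_ge0.
  split; first exact: gph_fplusF_shear.
  exact: (enorm_shearB l0 (calmN f_calm)).
apply: (upper_o_le (upper_oD hf hF)) => _ [x [_ [[y Fy <-] ->]]].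
rewrite /graph_proj /shear row_mxKl row_mxKr !row_mxB -dotv_row_mx_split.
by rewrite [f x + y - f x]addrAC subrr add0r addrACA opprB addKr.
Qed.

Hypothesis df : differentiable f xb.

Lemma rcoder_fplusF_sub w :
  rcoder (fplusF f F) xb vb w
    `<=` setsumv (rcoder_fun f xb w) (rcoder F xb (vb - f xb) w).
Proof.
move=> u /rnormalE hu; set u1 := adjoint ('d f xb) w.
have hrem k (Om : set 'rV[R]_(n + m)) y0 : upper_o Om (row_mx xb y0)
    (fun z => dotv k (f (lsubmx z) - f xb - 'd f xb (lsubmx z - xb))).
  apply: (upper_o_comp (C := 1) _ ltr01 _ (upper_o_remainder df k)) => // z _ _.
  by rewrite mul1r enorm_lsubmxB.
exists u1; last exists (u - u1); last by rewrite addrC subrK.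
- apply/rnormalE; apply: (upper_o_le (hrem (- w) (gph (sv f)) (f xb))).
  move=> _ [x [_ [-> ->]]].
  by rewrite row_mxB dotv_row_mx_adjoint row_mxKl dotvNl -dotvNr [in leRHS]opprB.
- apply/rnormalE.
  have hF : upper_o (gph F) (row_mx xb (vb - f xb))
      (fun z => dotv (row_mx u (- w)) (shear f z - row_mx xb vb)).
    apply: (upper_o_comp (C := 3 + 2 * l) _ r0 _ hu) => [|z Fz zr].
      by rewrite addr_ge0 ?mulr_ge0.
    split; first exact: gph_shear_fplusF.
    by rewrite -[X in row_mx xb X](subrK (f xb)); exact: (enorm_shearB l0 f_calm).
  apply: (upper_o_le (upper_oD hF (hrem w (gph F) (vb - f xb)))).
  move=> _ [x [y [Fy ->]]].
  rewrite /shear row_mxKl row_mxKr !row_mxB.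
  have -> : y + f x - vb = (y - (vb - f xb)) + (f x - f xb).
    by apply/rowP => i; rewrite !mxE; ring.
  rewrite -[u in leRHS](subrK u1) [in leRHS]dotv_row_mx_split dotv_row_mx_adjoint.
  by rewrite -addrA -dotvDr -[X in dotv w (X + _)]opprB addNr dotv0r addr0.
Qed.

End SumRule.

Theorem lemma6p2 (R : realType) (n m : nat)
  (f : 'rV[R]_n -> 'rV[R]_m) (F : 'rV[R]_n -> set 'rV[R]_m)
  (xb : 'rV[R]_n) (vb : 'rV[R]_m) :
  fplusF f F xb vb ->
  (exists2 l : R, 0 < l &
     \forall x \near xb, enorm (f x - f xb) <= l * enorm (x - xb)) ->
  (forall w : 'rV[R]_m,
     setsumv (rcoder_fun f xb w) (rcoder F xb (vb - f xb) w)
       `<=` rcoder (fplusF f F) xb vb w) /\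
  (differentiable f xb ->
   forall w : 'rV[R]_m,
     setsumv (rcoder_fun f xb w) (rcoder F xb (vb - f xb) w)
       = rcoder (fplusF f F) xb vb w).
Proof.
(* vb \in (f + F) xb only makes the base point meaningful; no step uses it. *)
move=> _ [l /ltW l0 /near_enorm[r r0 f_calm]].
have sum_sub := rcoder_sum_sub (F := F) (vb := vb) l0 r0 f_calm.
split=> [//|df w]; apply/seteqP; split; first exact: sum_sub.
exact: (rcoder_fplusF_sub (F := F) (vb := vb) l0 r0 f_calm df).
Qed.
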